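(* Fix $\theta\in\mathcal C$, $\lambda>0$, $\alpha\in(0,1]$, and $p\in[1,\infty]$. Then the BK metric space $(\mathcal X,\beta^{BK}_{\theta,\lambda,p,\alpha})$ is isometric to the $\ell^p$ wedge $\mathcal C\vee_p\mathcal Y$ of the pointed metric spaces $(\mathcal C,\beta,\theta)$ and $(\mathcal Y,d_{\mathrm{reg}},\ast)$, via the identification $J:\mathcal X\to \mathcal C\vee_p\mathcal Y$ that is the identity on $\mathcal C\subseteq\mathcal X$ and on $\mathcal X\setminus\mathcal C\subseteq\mathcal Y$. Equivalently, for all $\phi,\psi\in\mathcal X$: $\beta^{BK}_{\theta,\lambda,p,\alpha}(\phi,\psi)=\beta(\phi,\psi)$ if $\phi,\psi\in\mathcal C$; $=\lambda\,\delta_{\mathrm{reg}}(\phi,\psi)^\alpha$ if $\phi,\psi\notin\mathcal C$; $=\|(\beta(\phi,\theta),\lambda\rho(\psi)^\alpha)\|_{\ell^p}$ if $\phi\in\mathcal C$, $\psi\notin\mathcal C$; and $=\|(\beta(\psi,\theta),\lambda\rho(\phi)^\alpha)\|_{\ell^p}$ if $\psi\in\mathcal C$, $\phi\notin\mathcal C$.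
   Context: Let $A$ be a unital $C^*$-algebra, $H$ a Hilbert space, $\mathcal X=\mathrm{CB}(A,B(H))$, $\mathcal C=\mathrm{CP}(A,B(H))$, $\beta$ the Bures distance on $\mathcal C$, $\delta_{\mathrm{reg}}$ the regular-representation metric on $\mathcal X$, and $\rho(\phi)=\delta_{\mathrm{reg}}(\phi,0)$. The BK metric is $\beta^{BK}_{\theta,\lambda,p,\alpha}(\phi,\psi)=\bigl\|\bigl(\|\kappa_\theta(\phi)-\kappa_\theta(\psi)\|_\infty,\ \lambda\,\widetilde\delta_{\mathrm{reg}}(\phi,\psi)^\alpha\bigr)\bigr\|_{\ell^p(\mathbb R^2)}$, with $\kappa_\theta(\phi)(\eta)=\beta(\phi,\eta)-\beta(\theta,\eta)$ ($\eta\in\mathcal C$) for $\phi\in\mathcal C$, $\kappa_\theta(\phi)=0$ for $\phi\notin\mathcal C$, and $\widetilde\delta_{\mathrm{reg}}$ equal to $0$ on $\mathcal C\times\mathcal C$, to $\rho$ of the non-CP point on mixed pairs, and to $\delta_{\mathrm{reg}}$ on non-CP pairs. $\mathcal Y=(\mathcal X\setminus\mathcal C)\sqcup\{\ast\}$ with metric $d_{\mathrm{reg}}(x,y)=\lambda\delta_{\mathrm{reg}}(x,y)^\alpha$ for $x,y\notin\mathcal C$, $d_{\mathrm{reg}}(x,\ast)=\lambda\rho(x)^\alpha$, $d_{\mathrm{reg}}(\ast,\ast)=0$. For pointed metric spaces $(M_1,d_1,m_0)$, $(M_2,d_2,n_0)$, the $\ell^p$ wedge $M_1\vee_pM_2$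 is $M_1\sqcup M_2$ with $m_0\sim n_0$, metric $d_1$ on $M_1$, $d_2$ on $M_2$, and $\|(d_1(x,m_0),d_2(y,n_0))\|_{\ell^p}$ for $x\in M_1$, $y\in M_2$. *)

From HB Require Import structures.
From mathcomp Require Import all_boot all_order all_algebra.
From mathcomp Require Import all_classical all_reals all_analysis.
Set Implicit Arguments. Unset Strict Implicit. Unset Printing Implicit Defensive.
Import Order.TTheory GRing.Theory Num.Theory.
Local Open Scope classical_set_scope.
Local Open Scope ring_scope.

Section BK.
Variable R : realType.

Definition lp2 (p : \bar R) (a b : R) : R :=
  match p with
  | EFin q => powR (powR `|a| q + powR `|b| q) (q^-1)
  | _ => Num.max `|a| `|b|
  end.

Definition is_metric_on {T : Type} (A : set T) (d : T -> T -> R) : Prop :=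
  forall x y z, A x -> A y -> A z ->
    [/\ 0 <= d x y, (d x y = 0 <-> x = y), d x y = d y x
      & d x z <= d x y + d y z].

Variable X : Type.
Variable C : set X.          (* the CP maps inside the CB maps *)
Variable beta : X -> X -> R.  (* Bures distance (meaningful on C) *)
Variable dreg : X -> X -> R.
Variable zero : X.

Definition rho (x : X) : R := dreg x zero.

Definition kappa (theta phi eta : X) : R :=
  if `[< C phi >] then beta phi eta - beta theta eta else 0.

Definition kappa_sup_dist (theta phi psi : X) : R :=
  sup [set `|kappa theta phi eta - kappa theta psi eta| | eta in C].

Definition dreg_tilde (phi psi : X) : R :=
  if `[< C phi >] then (if `[< C psi >] then 0 else rho psi)
  else (if `[< C psi >] then rho phi else dreg phi psi).

Definition BK (theta : X) (lam : R) (p : \bar R) (alpha : R) (phi psi : X) : R :=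
  lp2 p (kappa_sup_dist theta phi psi) (lam * powR (dreg_tilde phi psi) alpha).

(* The space Y = (X \ C) ⊔ {*}, with * = None. *)
Definition Ytype := option {x : X | ~ C x}.

Definition d_regY (lam alpha : R) (y1 y2 : Ytype) : R :=
  match y1, y2 with
  | Some x, Some y => lam * powR (dreg (sval x) (sval y)) alpha
  | Some x, None => lam * powR (rho (sval x)) alpha
  | None, Some y => lam * powR (rho (sval y)) alpha
  | None, None => 0
  end.

Definition Ctype := {x : X | C x}.
Definition beta_C (x y : Ctype) : R := beta (sval x) (sval y).

End BK.

(* l^p wedge of pointed metric spaces (M1,d1,m0), (M2,d2,n0), realised on
   M1 + M2; the identification m0 ~ n0 is reflected by the wedge distance
   between inl m0 and inr n0 being 0. *)
Definition wedge_dist {R : realType} {M1 M2 : Type} (p : \bar R)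
  (d1 : M1 -> M1 -> R) (m0 : M1) (d2 : M2 -> M2 -> R) (n0 : M2)
  (u v : M1 + M2) : R :=
  match u, v with
  | inl x, inl y => d1 x y
  | inr x, inr y => d2 x y
  | inl x, inr y => lp2 p (d1 x m0) (d2 y n0)
  | inr y, inl x => lp2 p (d1 x m0) (d2 y n0)
  end.

Definition Jmap {X : Type} (C : set X) (x : X) :
  {x : X | C x} + option {x : X | ~ C x} :=
  match pselect (C x) with
  | left h => inl (exist _ x h)
  | right h => inr (Some (exist _ x h))
  end.

From HB Require Import structures.
From mathcomp Require Import all_boot all_order all_algebra.
From mathcomp Require Import all_classical all_reals all_analysis.
From mathcomp Require Import lra.
Import Order.TTheory GRing.Theory Num.Theory.
Local Open Scope classical_set_scope.
Local Open Scope ring_scope.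

(* For phi, psi in C the functions beta(phi, .) and beta(psi, .) are at sup
   distance exactly beta(phi, psi) on C: the triangle inequality bounds every
   |beta(phi, eta) - beta(psi, eta)|, and eta = psi attains the bound.  The
   shift by beta(theta, .) in kappa cancels between two points of C, and
   against kappa = 0 off C it leaves the sup distance beta(., theta).  The
   second coordinate vanishes on C x C and is lam rho^alpha on mixed pairs, so
   the l^p combination is the wedge distance through theta ~ *. *)

Lemma sup_max (R : realType) (S : set R) (M : R) :
  S M -> ubound S M -> sup S = M.
Proof.
move=> SM ubM; apply/eqP; rewrite eq_le ge_sup ?ub_le_sup //; by exists M.
Qed.

Lemma lp2_x0 (R : realType) (p : \bar R) (a : R) :
  p != 0%:E -> lp2 p a 0 = `|a|.
Proof.
case: p => [q q0| _ | _] /=; [|by rewrite normr0 max_l..].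
have {}q0 : q != 0 by apply: contraNneq q0 => ->.
by rewrite normr0 powR0 // addr0 -powRrM mulfV ?powRr1.
Qed.

Lemma lp2_0x (R : realType) (p : \bar R) (b : R) :
  p != 0%:E -> lp2 p 0 b = `|b|.
Proof.
case: p => [q q0| _ | _] /=; [|by rewrite normr0 max_r..].
have {}q0 : q != 0 by apply: contraNneq q0 => ->.
by rewrite normr0 powR0 // add0r -powRrM mulfV ?powRr1.
Qed.

Section MetricOn.
Context {R : realType} {T : Type} {A : set T} {d : T -> T -> R}.
Hypothesis hd : is_metric_on A d.

Lemma metric_on_ge0 a b : A a -> A b -> 0 <= d a b.
Proof. by move=> Aa Ab; have [] := hd _ _ _ Aa Ab Ab. Qed.

Lemma metric_on_xx a : A a -> d a a = 0.
Proof. by move=> Aa; have [_ [_ ->]] := hd _ _ _ Aa Aa Aa. Qed.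

Lemma metric_on_dist_sub a b c : A a -> A b -> A c ->
  `|d a c - d b c| <= d a b.
Proof.
move=> Aa Ab Ac.
have [_ _ _ tri_abc] := hd _ _ _ Aa Ab Ac.
have [_ _ _ tri_bac] := hd _ _ _ Ab Aa Ac.
have [_ _ dab_sym _] := hd _ _ _ Aa Ab Aa.
rewrite ler_norml; apply/andP; split; lra.
Qed.

Lemma sup_metric_on_dist_sub a b : A a -> A b ->
  sup [set `|d a c - d b c| | c in A] = d a b.
Proof.
move=> Aa Ab; apply: sup_max.
  by exists b => //; rewrite metric_on_xx // subr0 ger0_norm ?metric_on_ge0.
by move=> _ [c Ac <-]; apply: metric_on_dist_sub.
Qed.

End MetricOn.

Section KappaSupDist.
Context {R : realType} {X : Type} {C : set X} {beta : X -> X -> R}.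
Hypothesis hbeta : is_metric_on C beta.
Variables (theta : X) (htheta : C theta).

Let sup_kappa_dist phi psi (f : X -> R) :
  (forall eta, C eta -> `|kappa C beta theta phi eta - kappa C beta theta psi eta| = f eta) ->
  kappa_sup_dist C beta theta phi psi = sup [set f eta | eta in C].
Proof. by move=> hf; rewrite /kappa_sup_dist (eq_imagel hf). Qed.

Lemma kappa_sup_dist_in_in phi psi : C phi -> C psi ->
  kappa_sup_dist C beta theta phi psi = beta phi psi.
Proof.
move=> Cphi Cpsi; rewrite -(sup_metric_on_dist_sub hbeta _ _ Cphi Cpsi).
apply: sup_kappa_dist => eta _; congr `|_|.
by rewrite /kappa !asboolT //; lra.
Qed.

Lemma kappa_sup_dist_in_out phi psi : C phi -> ~ C psi ->
  kappa_sup_dist C beta theta phi psi = beta phi theta.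
Proof.
move=> Cphi Cpsi; rewrite -(sup_metric_on_dist_sub hbeta _ _ Cphi htheta).
by apply: sup_kappa_dist => eta _; rewrite /kappa asboolT // asboolF // subr0.
Qed.

Lemma kappa_sup_dist_out_in phi psi : ~ C phi -> C psi ->
  kappa_sup_dist C beta theta phi psi = beta psi theta.
Proof.
move=> Cphi Cpsi; rewrite -(sup_metric_on_dist_sub hbeta _ _ Cpsi htheta).
by apply: sup_kappa_dist => eta _; rewrite /kappa asboolF // asboolT // sub0r normrN.
Qed.

Lemma kappa_sup_dist_out_out phi psi : ~ C phi -> ~ C psi ->
  kappa_sup_dist C beta theta phi psi = 0.
Proof.
move=> Cphi Cpsi; rewrite /kappa_sup_dist /kappa !asboolF // subrr normr0.
by apply: sup_max => [|_ [eta _ <-]] //; exists theta.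
Qed.

End KappaSupDist.

Theorem theorem5p5 (R : realType) (X : Type) (C : set X)
  (beta dreg : X -> X -> R) (zero : X)
  (hbeta : is_metric_on C beta) (hdreg : is_metric_on setT dreg)
  (hzero : C zero)
  (theta : X) (htheta : C theta)
  (lam : R) (hlam : 0 < lam)
  (alpha : R) (halpha : 0 < alpha <= 1)
  (p : \bar R) (hp : (1%:E <= p)%E) :
  forall phi psi : X,
    BK C beta dreg zero theta lam p alpha phi psi =
    wedge_dist p (@beta_C R X C beta) (exist _ theta htheta)
      (@d_regY R X C dreg zero lam alpha) None
      (Jmap C phi) (Jmap C psi).
Proof.
move=> phi psi.
have alpha0 : alpha != 0 by apply/eqP => alpha0; rewrite alpha0 in halpha; lra.
have p0 : p != 0%:E by apply: contraTneq hp => ->; rewrite lee_fin ler10.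
rewrite /BK /Jmap /dreg_tilde /beta_C.
case: pselect => Cphi; case: pselect => Cpsi /=;
  rewrite ?(asboolT Cphi) ?(asboolT Cpsi) ?(asboolF Cphi) ?(asboolF Cpsi).
- rewrite kappa_sup_dist_in_in // powR0 // mulr0 lp2_x0 //.
  by rewrite ger0_norm // (metric_on_ge0 hbeta).
- by rewrite kappa_sup_dist_in_out.
- by rewrite kappa_sup_dist_out_in.
- rewrite kappa_sup_dist_out_out // lp2_0x // ger0_norm //.
  by rewrite mulr_ge0 ?powR_ge0 ?ltW.
Qed.
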